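(* For every $d=1,\dots,\mathbf d-1$ and all $m,n\in\mathcal M$, the function $x\mapsto\mathcal V^n_{d+1}(x,y_d,b^{mn}_{d+1})$ (with $y_d$ and $b^{mn}_{d+1}$ fixed) is convex.
   Context: Let $\mathbf d\ge2$, $\mathcal M$ a finite set of states, $\Omega$ a finite set of scenarios with $\pi^\omega=1/|\Omega|$; $\pi^{lm}_d\ge0$ with $\sum_m\pi^{lm}_d=1$. For each $d$: cost vector $c_d$, matrices $A_d,C_d$, a bilinear map $(x,b)\mapsto x^\top B_db$ into the right-hand-side space, and a set $\mathcal Y_d$, given by linear constraints (possibly linking scenarios), of decisions $y_d=(y^\omega_d)_{\omega\in\Omega}$. Data vectors $b^{lm\omega}_d$; write $b^{lm}_d=(b^{lm\omega}_d)_{\omega\in\Omega}$. Define $\mathcal V^m_{\mathbf d}(x,y_{\mathbf d-1},b^{lm}_{\mathbf d})=\min_{y_{\mathbf d}\in\mathcal Y_{\mathbf d}}\sum_\omega\pi^\omega c_{\mathbf d}^\top y^\omega_{\mathbf d}$ s.t. $A_{\mathbf d}y^\omega_{\mathbf d}\le x^\top B_{\mathbf d}b^{lm\omega}_{\mathbf d}+C_{\mathbf d}y_{\mathbf d-1}$ for all $\omega$, and for $2\le d\le\mathbf d-1$, $\mathcal V^m_d(x,y_{d-1},b^{lm}_d)=\min_{y_d\in\mathcal Y_d}\sum_\omega\pi^\omega\big(c_d^\top y^\omega_d+\sum_n\pi^{mn}_{d+1}\mathcal V^n_{d+1}(x,y^\omega_d,b^{mn}_{d+1})\big)$ s.t.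 $A_dy^\omega_d\le x^\top B_db^{lm\omega}_d+C_dy_{d-1}$ for all $\omega$ (the argument $y_{d-1}$ is a single-scenario vector). Standing assumption: relatively complete recourse (all these problems feasible with finite optimal value for all arguments considered). *)

From HB Require Import structures.
From mathcomp Require Import all_boot all_order all_algebra.
From mathcomp Require Import boolp classical_sets reals.
Import Order.TTheory GRing.Theory Num.Theory.
Local Open Scope ring_scope.
Local Open Scope classical_set_scope.

(* For stage d:
     kd d = dimension of a single-scenario decision y_d^omega,
     rd d = number of rows of the stage-d constraints A_d y <= x^T B_d b + C_d y_{d-1},
     qd d = dimension of the data vectors b_d^{lm omega},
     sd d = number of linear constraints defining the set Y_d. *)
Record msp_data (R : realType) (Omega M : finType) (p : nat) := MSPData {
  kd : nat -> nat;
  rd : nat -> nat;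
  qd : nat -> nat;
  sd : nat -> nat;
  cost : forall d, 'cV[R]_(kd d);
  Amat : forall d, 'M[R]_(rd d, kd d);
  Cmat : forall d, 'M[R]_(rd d, kd d.-1);
  Bmat : forall d, 'I_(rd d) -> 'M[R]_(p, qd d);      (* (x^T B_d b)_i = x^T (Bmat d i) b *)
  Gmat : forall d, Omega -> 'M[R]_(sd d, kd d);       (* Y_d = {y | sum_w G_d^w y^w <= g_d} *)
  gvec : forall d, 'cV[R]_(sd d);
  prob : nat -> M -> M -> R;                           (* prob d l m = pi^{lm}_d *)
  bdata : forall d, M -> M -> Omega -> 'cV[R]_(qd d)  (* bdata d l m w = b^{lm w}_d *)
}.


Arguments kd {R Omega M p} _.
Arguments rd {R Omega M p} _.
Arguments qd {R Omega M p} _.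
Arguments sd {R Omega M p} _.
Arguments cost {R Omega M p} _.
Arguments Amat {R Omega M p} _.
Arguments Cmat {R Omega M p} _.
Arguments Bmat {R Omega M p} _.
Arguments Gmat {R Omega M p} _.
Arguments gvec {R Omega M p} _.
Arguments prob {R Omega M p} _.
Arguments bdata {R Omega M p} _.


Section MSP.
Variables (R : realType) (Omega M : finType) (p : nat).
Variable P : msp_data R Omega M p.

Definition bil d (x : 'cV[R]_p) (bb : 'cV[R]_(qd P d)) : 'cV[R]_(rd P d) :=
  \col_i ((x^T *m Bmat P d i *m bb) 0 0).

Definition piO : R := 1 / (#|Omega|%:R).

Definition lin n (c y : 'cV[R]_n) : R := (c^T *m y) 0 0.

Definition inY d (y : Omega -> 'cV[R]_(kd P d)) : Prop :=
  forall j, (\sum_w (Gmat P d w *m y w)) j 0 <= gvec P d j 0.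

Definition feas d (x : 'cV[R]_p) (yprev : 'cV[R]_(kd P d.-1))
    (bb : Omega -> 'cV[R]_(qd P d)) (y : Omega -> 'cV[R]_(kd P d)) : Prop :=
  inY d y /\
  forall w i, (Amat P d *m y w) i 0 <= (bil d x (bb w) + Cmat P d *m yprev) i 0.

Definition stage_vals d (x : 'cV[R]_p) (yprev : 'cV[R]_(kd P d.-1))
    (bb : Omega -> 'cV[R]_(qd P d)) (cont : 'cV[R]_(kd P d) -> R) : set R :=
  [set v | exists y, feas d x yprev bb y /\
     v = \sum_w piO * (lin (kd P d) (cost P d) (y w) + cont (y w))].

(* t = number of remaining stages after stage d *)
Fixpoint Vaux (t d : nat) (m : M) (x : 'cV[R]_p) (yprev : 'cV[R]_(kd P d.-1))
    (bb : Omega -> 'cV[R]_(qd P d)) {struct t} : R :=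
  match t with
  | 0 => inf (stage_vals d x yprev bb (fun _ => 0))
  | t'.+1 => inf (stage_vals d x yprev bb
       (fun yd => \sum_n prob P d.+1 m n * Vaux t' d.+1 n x yd (bdata P d.+1 m n)))
  end.

Definition Vvals (Dbf d : nat) (m : M) (x : 'cV[R]_p) (yprev : 'cV[R]_(kd P d.-1))
    (bb : Omega -> 'cV[R]_(qd P d)) : set R :=
  match (Dbf - d)%N with
  | 0 => stage_vals d x yprev bb (fun _ => 0)
  | t'.+1 => stage_vals d x yprev bb
       (fun yd => \sum_n prob P d.+1 m n * Vaux t' d.+1 n x yd (bdata P d.+1 m n))
  end.

Definition V (Dbf d : nat) (m : M) (x : 'cV[R]_p) (yprev : 'cV[R]_(kd P d.-1))
    (bb : Omega -> 'cV[R]_(qd P d)) : R :=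
  Vaux (Dbf - d) d m x yprev bb.

Definition rel_complete_recourse (Dbf : nat) : Prop :=
  forall d, (2 <= d <= Dbf)%N -> forall (l m : M) (x : 'cV[R]_p)
    (yprev : 'cV[R]_(kd P d.-1)),
    Vvals Dbf d m x yprev (bdata P d l m) !=set0 /\
    has_lbound (Vvals Dbf d m x yprev (bdata P d l m)).

End MSP.

Arguments bil {R Omega M p}.
Arguments piO {R} Omega.
Arguments lin {R}.
Arguments inY {R Omega M p}.
Arguments feas {R Omega M p}.
Arguments stage_vals {R Omega M p}.
Arguments Vaux {R Omega M p}.
Arguments Vvals {R Omega M p}.
Arguments V {R Omega M p}.
Arguments rel_complete_recourse {R Omega M p}.

(** By backward induction on the number of remaining stages, every stage value
    V^m_d(x, y_{d-1}, b) is jointly convex in (x, y_{d-1}).  The constraints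
    are linear in (x, y_{d-1}, y_d), so a convex combination of feasible
    decisions is feasible for the combined arguments, and its objective (a
    linear cost plus a nonnegative combination of jointly convex next-stage
    values) is at most the combination of the objectives; passing to infima
    gives convexity.  Fixing y_{d-1} yields convexity in x alone. *)

From HB Require Import structures.
From mathcomp Require Import all_boot all_order all_algebra.
From mathcomp Require Import boolp classical_sets reals.
From mathcomp Require Import ring zify.
Import Order.TTheory GRing.Theory Num.Theory.
Local Open Scope ring_scope.
Local Open Scope classical_set_scope.

Section ConvexCombination.
Context {R : numDomainType}.

Definition jointly_convex (U W : lmodType R) (f : U -> W -> R) :=
  forall (t : R) x1 x2 y1 y2, 0 <= t <= 1 ->
    f (t *: x1 + (1 - t) *: x2) (t *: y1 + (1 - t) *: y2)
    <= t * f x1 y1 + (1 - t) * f x2 y2.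
#[local] Arguments jointly_convex {U W}.

Lemma ler_convex_comb {t a1 a2 b1 b2 : R} :
  0 <= t <= 1 -> a1 <= b1 -> a2 <= b2 ->
  t * a1 + (1 - t) * a2 <= t * b1 + (1 - t) * b2.
Proof.
move=> /andP[t0 t1] le_ab1 le_ab2.
by rewrite lerD // ler_wpM2l // subr_ge0.
Qed.

Lemma jointly_convex_sum {U W : lmodType R} {I : finType}
    {w : I -> R} {f : I -> U -> W -> R} :
  (forall i, 0 <= w i) -> (forall i, jointly_convex (f i)) ->
  jointly_convex (fun x y => \sum_i w i * f i x y).
Proof.
move=> w_ge0 f_cvx t x1 x2 y1 y2 t01.
rewrite !mulr_sumr -big_split /=; apply: ler_sum => i _.
apply: (le_trans (ler_wpM2l (w_ge0 i) (f_cvx i t x1 x2 y1 y2 t01))).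
by rewrite le_eqVlt; apply/predU1l; ring.
Qed.

Lemma convex_comb_mxE m n (t : R) (A B : 'M[R]_(m, n)) i j :
  (t *: A + (1 - t) *: B) i j = t * A i j + (1 - t) * B i j.
Proof. by rewrite !mxE. Qed.

Lemma mulmx_convex_comb m n (A : 'M[R]_(m, n)) (t : R) (y1 y2 : 'cV[R]_n) :
  A *m (t *: y1 + (1 - t) *: y2) = t *: (A *m y1) + (1 - t) *: (A *m y2).
Proof. by rewrite mulmxDr -!scalemxAr. Qed.

End ConvexCombination.

Arguments jointly_convex {R U W}.

Lemma inf_convex_comb (R : realType) (A B : set R) (c t : R) :
  0 <= t <= 1 -> A !=set0 -> has_lbound A -> B !=set0 -> has_lbound B ->
  (forall a b, A a -> B b -> c <= t * a + (1 - t) * b) ->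
  c <= t * inf A + (1 - t) * inf B.
Proof.
move=> t01 A0 Albd B0 Blbd c_le; apply/ler_addgt0Pr => e e0.
have [a Aa lt_a] := inf_adherent e0 (conj A0 Albd).
have [b Bb lt_b] := inf_adherent e0 (conj B0 Blbd).
apply: (le_trans (c_le a b Aa Bb)).
have -> : t * inf A + (1 - t) * inf B + e
          = t * (inf A + e) + (1 - t) * (inf B + e) by ring.
by apply: ler_convex_comb => //; apply: ltW.
Qed.

Section StageConvexity.
Context {R : realType} {Omega M : finType} {p : nat} (P : msp_data R Omega M p).

Lemma bilE d (x : 'cV[R]_p) bb i j :
  bil P d x bb i j = (x^T *m Bmat P d i *m bb) 0 0.
Proof. by rewrite mxE. Qed.

Lemma bilD d (x1 x2 : 'cV[R]_p) bb :
  bil P d (x1 + x2) bb = bil P d x1 bb + bil P d x2 bb.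
Proof.
by apply/matrixP => i j; rewrite [RHS]mxE !bilE linearD /= !mulmxDl mxE.
Qed.

Lemma bilZ d a (x : 'cV[R]_p) bb : bil P d (a *: x) bb = a *: bil P d x bb.
Proof.
by apply/matrixP => i j; rewrite [RHS]mxE !bilE linearZ /= -!scalemxAl mxE.
Qed.

Lemma inY_convex d (t : R) (y1 y2 : Omega -> 'cV[R]_(kd P d)) :
  0 <= t <= 1 -> inY P d y1 -> inY P d y2 ->
  inY P d (fun w => t *: y1 w + (1 - t) *: y2 w).
Proof.
move=> t01 Y1 Y2 j.
have -> : \sum_w (Gmat P d w *m (t *: y1 w + (1 - t) *: y2 w))
    = t *: \sum_w (Gmat P d w *m y1 w) + (1 - t) *: \sum_w (Gmat P d w *m y2 w).
  rewrite !scaler_sumr -big_split.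
  by apply: eq_bigr => w _; apply: mulmx_convex_comb.
rewrite convex_comb_mxE; apply: (le_trans (ler_convex_comb t01 (Y1 j) (Y2 j))).
by rewrite -mulrDl subrKC mul1r.
Qed.

Lemma feas_convex d (t : R) x1 x2 yp1 yp2 bb
    (y1 y2 : Omega -> 'cV[R]_(kd P d)) :
  0 <= t <= 1 -> feas P d x1 yp1 bb y1 -> feas P d x2 yp2 bb y2 ->
  feas P d (t *: x1 + (1 - t) *: x2) (t *: yp1 + (1 - t) *: yp2) bb
    (fun w => t *: y1 w + (1 - t) *: y2 w).
Proof.
move=> t01 [Y1 F1] [Y2 F2]; split; first exact: inY_convex.
move=> w i.
have -> : bil P d (t *: x1 + (1 - t) *: x2) (bb w)
           + Cmat P d *m (t *: yp1 + (1 - t) *: yp2)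
    = t *: (bil P d x1 (bb w) + Cmat P d *m yp1)
      + (1 - t) *: (bil P d x2 (bb w) + Cmat P d *m yp2).
  by rewrite bilD !bilZ mulmx_convex_comb !scalerDr addrACA.
rewrite mulmx_convex_comb !convex_comb_mxE.
exact: ler_convex_comb.
Qed.

Lemma lin_convex_comb n (c : 'cV[R]_n) (t : R) (y1 y2 : 'cV[R]_n) :
  lin n c (t *: y1 + (1 - t) *: y2) = t * lin n c y1 + (1 - t) * lin n c y2.
Proof. by rewrite /lin mulmx_convex_comb convex_comb_mxE. Qed.

Lemma stage_value_convex d (bb : Omega -> 'cV[R]_(qd P d))
    (cont : 'cV[R]_p -> 'cV[R]_(kd P d) -> R) :
  jointly_convex cont ->
  (forall x yp, stage_vals P d x yp bb (cont x) !=set0 /\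
                has_lbound (stage_vals P d x yp bb (cont x))) ->
  jointly_convex (fun x yp => inf (stage_vals P d x yp bb (cont x))).
Proof.
move=> cont_cvx bounded t x1 x2 yp1 yp2 t01.
have [_ lbd] := bounded (t *: x1 + (1 - t) *: x2) (t *: yp1 + (1 - t) *: yp2).
have [ne1 lbd1] := bounded x1 yp1; have [ne2 lbd2] := bounded x2 yp2.
apply: inf_convex_comb => // _ _ [y1 [F1 ->]] [y2 [F2 ->]].
apply: (le_trans (ge_inf lbd _)).
  exists (fun w => t *: y1 w + (1 - t) *: y2 w).
  by split; first exact: feas_convex.
have piO_ge0 : 0 <= piO Omega :> R by rewrite /piO mul1r invr_ge0.
rewrite !mulr_sumr -big_split /=; apply: ler_sum => w _.
have cont_le := cont_cvx t x1 x2 (y1 w) (y2 w) t01.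
apply: (le_trans (ler_wpM2l piO_ge0 (lerD (lexx _) cont_le))).
by rewrite lin_convex_comb le_eqVlt; apply/predU1l; ring.
Qed.

Definition recourse_cost (k d : nat) (m : M) (x : 'cV[R]_p) :
    'cV[R]_(kd P d) -> R :=
  if k is k'.+1 then
    fun yd => \sum_n prob P d.+1 m n * Vaux P k' d.+1 n x yd (bdata P d.+1 m n)
  else fun _ => 0.

Lemma VauxE k d m x yp bb :
  Vaux P k d m x yp bb = inf (stage_vals P d x yp bb (recourse_cost k d m x)).
Proof. by case: k. Qed.

Lemma VvalsE Dbf d m x yp bb :
  Vvals P Dbf d m x yp bb
  = stage_vals P d x yp bb (recourse_cost (Dbf - d) d m x).
Proof. by rewrite /Vvals; case: (Dbf - d)%N. Qed.

Lemma recourse_stage_bounded {Dbf k d} l m :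
  rel_complete_recourse P Dbf -> (2 <= d)%N -> (d + k = Dbf)%N ->
  forall x yp,
    stage_vals P d x yp (bdata P d l m) (recourse_cost k d m x) !=set0 /\
    has_lbound (stage_vals P d x yp (bdata P d l m) (recourse_cost k d m x)).
Proof.
move=> recourse d_ge2 dk x yp.
have <- : (Dbf - d)%N = k by lia.
rewrite -!VvalsE; apply: recourse; lia.
Qed.

Hypothesis prob_ge0 : forall d l m, 0 <= prob P d l m.

Lemma Vaux_convex {Dbf} : rel_complete_recourse P Dbf ->
  forall k d l m, (2 <= d)%N -> (d + k = Dbf)%N ->
  jointly_convex (fun x yp => Vaux P k d m x yp (bdata P d l m)).
Proof.
move=> recourse.
elim=> [|k IH] d l m d_ge2 dk t x1 x2 yp1 yp2 t01; rewrite !VauxE;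
  apply: (stage_value_convex d (bdata P d l m) (recourse_cost _ d m) _ _
            t x1 x2 yp1 yp2 t01);
  try exact: (recourse_stage_bounded l m recourse d_ge2 dk).
- by move=> s *; rewrite /= !mulr0 addr0.
- by apply: (jointly_convex_sum (prob_ge0 d.+1 m)) => n; apply: (IH d.+1); lia.
Qed.

End StageConvexity.

Theorem lemma12 (R : realType) (Omega M : finType) (p : nat)
  (P : msp_data R Omega M p) (Dbf : nat) :
  (2 <= Dbf)%N ->
  (forall d l m, 0 <= prob P d l m) ->
  (forall d l, \sum_m prob P d l m = 1) ->
  rel_complete_recourse P Dbf ->
  forall d, (1 <= d <= Dbf.-1)%N ->
  forall (m n : M) (yd : 'cV[R]_(kd P d)) (x1 x2 : 'cV[R]_p) (t : R),
    0 <= t <= 1 ->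
    V P Dbf d.+1 n (t *: x1 + (1 - t) *: x2) yd (bdata P d.+1 m n)
    <= t * V P Dbf d.+1 n x1 yd (bdata P d.+1 m n)
       + (1 - t) * V P Dbf d.+1 n x2 yd (bdata P d.+1 m n).
Proof.
move=> _ prob_ge0 _ recourse d d_range m n yd x1 x2 t t01.
have d_ge2 : (2 <= d.+1)%N by lia.
have horizon : (d.+1 + (Dbf - d.+1) = Dbf)%N by lia.
have := Vaux_convex P prob_ge0 recourse (Dbf - d.+1) d.+1 m n d_ge2 horizon
          t x1 x2 yd yd t01.
by rewrite -scalerDl subrKC scale1r.
Qed.
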